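(* Let $G$ be a group, $H\le G$, $S$ a right transversal of $H$ in $G$ with induced right loop operation $\circ$, and for $x\in S$, $h\in H$ let $x\theta h$ denote the unique element of $S\cap Hxh$. Let $U$ be a congruence on $(S,\circ)$ with $\{(x,x\theta h): h\in H, x\in S\}\subseteq U$, and let $T$ be the $U$-class of $1$. Then $S/U$ is a group, $N=HT$ is a normal subgroup of $G=HS$, $H\le N$, $N\cap S=T$, and $G/N\cong S/U$.
   Context: For a subgroup $H$ of a group $G$, a right transversal $S$ is a subset containing exactly one element of each right coset $Hg$, with $1\in S$; then $G=HS$. The induced operation: $x\circ y$ is the unique element of $S\cap Hxy$; $(S,\circ)$ is a right loop (two-sided identity, unique solutions of $X\circ a=b$). A congruence on a right loop $S$ is an equivalence relation on $S$ that is a right subloop of $S\times S$ (componentwise operation); if $T$ is the class of $1$, the classes are $T\circ x$ and $S/U=\{T\circ x\}$ has operation $(T\circ x)\circ(T\circ y)=T\circ(x\circ y)$. *)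

Set Implicit Arguments.

Section Defs.
Variable G : Type.
Variable mul : G -> G -> G.
Variable inv : G -> G.
Variable one : G.

Definition is_group : Prop :=
  (forall x y z, mul x (mul y z) = mul (mul x y) z) /\
  (forall x, mul one x = x) /\ (forall x, mul x one = x) /\
  (forall x, mul (inv x) x = one) /\ (forall x, mul x (inv x) = one).

Definition is_subgroup (H : G -> Prop) : Prop :=
  H one /\ (forall x y, H x -> H y -> H (mul x y)) /\ (forall x, H x -> H (inv x)).

Definition is_normal_subgroup (N : G -> Prop) : Prop :=
  is_subgroup N /\ (forall g n, N n -> N (mul (mul (inv g) n) g)).

Definition in_rcoset (H : G -> Prop) (g x : G) : Prop := H (mul x (inv g)).

Definition right_transversal (H S : G -> Prop) : Prop :=
  S one /\
  (forall g, exists s, S s /\ in_rcoset H g s) /\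
  (forall s s', S s -> S s' -> in_rcoset H s' s -> s = s').

Definition is_induced_op (H S : G -> Prop) (circ : G -> G -> G) : Prop :=
  forall x y, S x -> S y -> S (circ x y) /\ in_rcoset H (mul x y) (circ x y).

Definition is_theta (H S : G -> Prop) (theta : G -> G -> G) : Prop :=
  forall x h, S x -> H h -> S (theta x h) /\ in_rcoset H (mul x h) (theta x h).

(* U is a congruence on the right loop (S, circ): an equivalence relation on S
   which is a right subloop of S x S (contains (1,1), closed under the
   componentwise operation and under componentwise right division). *)
Definition is_congruence (S : G -> Prop) (circ : G -> G -> G)
    (U : G -> G -> Prop) : Prop :=
  (forall x y, U x y -> S x /\ S y) /\
  (forall x, S x -> U x x) /\
  (forall x y, U x y -> U y x) /\
  (forall x y z, U x y -> U y z -> U x z) /\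
  U one one /\
  (forall a a' b b', U a a' -> U b b' -> U (circ a b) (circ a' b')) /\
  (forall a a' b b' X X', U a a' -> U b b' -> S X -> S X' ->
      circ X a = b -> circ X' a' = b' -> U X X').

Definition class_one (U : G -> G -> Prop) : G -> Prop := fun t => U one t.

Definition setmul (A B : G -> Prop) : G -> Prop :=
  fun g => exists a b, A a /\ B b /\ g = mul a b.

(* S/U (classes of U with the induced operation) is a group; elements of S/U
   are represented by elements of S, equality in S/U being U. *)
Definition quotient_loop_is_group (S : G -> Prop) (circ : G -> G -> G)
    (U : G -> G -> Prop) : Prop :=
  (forall x x' y y', U x x' -> U y y' -> U (circ x y) (circ x' y')) /\
  (forall x y z, S x -> S y -> S z ->
      U (circ (circ x y) z) (circ x (circ y z))) /\
  (forall x, S x -> U (circ one x) x /\ U (circ x one) x) /\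
  (forall x, S x -> exists y, S y /\ U (circ x y) one /\ U (circ y x) one).

(* G/N is isomorphic to S/U: there is a map f : G -> S inducing a well-defined
   bijective homomorphism from the cosets of N onto the U-classes. *)
Definition quotients_isomorphic (N S : G -> Prop) (circ : G -> G -> G)
    (U : G -> G -> Prop) : Prop :=
  exists f : G -> G,
    (forall g, S (f g)) /\
    (forall g1 g2, N (mul g1 (inv g2)) <-> U (f g1) (f g2)) /\
    (forall g1 g2, U (f (mul g1 g2)) (circ (f g1) (f g2))) /\
    (forall s, S s -> exists g, U (f g) s).

End Defs.

From Stdlib Require Import ClassicalEpsilon.

Set Implicit Arguments.

(* Choosing for every g
   the unique element [rep g] of S in the coset H g gives a map G -> S which
   is constant on right cosets of H and satisfies rep (a b) = rep (rep a * b);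
   both the loop operation x o y = rep (x y) and x theta h = rep (x h) are
   values of this map.  If the congruence U contains every pair (x, x theta h),
   then rep becomes a homomorphism up to U:
        rep (a b)  U  rep a o rep b.                          (rep_morphism)
   Everything else follows from this single fact: S/U inherits associativity
   and inverses from G, the kernel  N = H T  is exactly {g | U 1 (rep g)}, so
   it is a normal subgroup containing H with N /\ S = T, and rep induces the
   isomorphism G/N ~ S/U, injectivity coming from right division in S/U. *)

Section TransversalQuotient.

Variables (G : Type) (mul : G -> G -> G) (inv : G -> G) (one : G).
Variables (H S : G -> Prop) (circ theta : G -> G -> G) (U : G -> G -> Prop).
Hypothesis group_G : is_group mul inv one.

Lemma mulA x y z : mul x (mul y z) = mul (mul x y) z.
Proof. destruct group_G as (assoc & _). apply assoc. Qed.

Lemma mul1g x : mul one x = x.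
Proof. destruct group_G as (_ & left_id & _). apply left_id. Qed.

Lemma mulg1 x : mul x one = x.
Proof. destruct group_G as (_ & _ & right_id & _). apply right_id. Qed.

Lemma mulVg x : mul (inv x) x = one.
Proof. destruct group_G as (_ & _ & _ & left_inv & _). apply left_inv. Qed.

Lemma mulgV x : mul x (inv x) = one.
Proof. destruct group_G as (_ & _ & _ & _ & right_inv). apply right_inv. Qed.

Lemma inv_unique x y : mul x y = one -> y = inv x.
Proof. intros E. rewrite <- (mul1g y), <- (mulVg x), <- mulA, E, mulg1. reflexivity. Qed.

Lemma inv_mul a b : inv (mul a b) = mul (inv b) (inv a).
Proof.
  symmetry. apply inv_unique.
  rewrite <- mulA, (mulA b), mulgV, mul1g, mulgV. reflexivity.
Qed.

Lemma inv_inv a : inv (inv a) = a.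
Proof. symmetry. apply inv_unique, mulVg. Qed.

Lemma mulgVK a b : mul (mul a (inv b)) b = a.
Proof. rewrite <- mulA, mulVg, mulg1. reflexivity. Qed.

Lemma inv_rdiv a b : inv (mul a (inv b)) = mul b (inv a).
Proof. rewrite inv_mul, inv_inv. reflexivity. Qed.

Lemma rdiv_trans a b c : mul (mul a (inv b)) (inv (mul c (inv b))) = mul a (inv c).
Proof. rewrite inv_rdiv, mulA, mulgVK. reflexivity. Qed.

Hypothesis subgroup_H : is_subgroup mul inv one H.
Hypothesis transversal_S : right_transversal mul inv one H S.

Lemma coset_meets_S g : exists s, S s /\ in_rcoset mul inv H g s.
Proof. destruct transversal_S as (_ & meets & _). apply meets. Qed.

Definition rep (g : G) : G :=
  proj1_sig (constructive_indefinite_description _ (coset_meets_S g)).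

Lemma rep_spec g : S (rep g) /\ H (mul (rep g) (inv g)).
Proof. exact (proj2_sig (constructive_indefinite_description _ (coset_meets_S g))). Qed.

Lemma rep_S g : S (rep g).
Proof. exact (proj1 (rep_spec g)). Qed.

Lemma rep_coset g : H (mul (rep g) (inv g)).
Proof. exact (proj2 (rep_spec g)). Qed.

Lemma H_one : H one.
Proof. destruct subgroup_H as (one_in & _). exact one_in. Qed.

Lemma H_mul x y : H x -> H y -> H (mul x y).
Proof. destruct subgroup_H as (_ & mul_closed & _). apply mul_closed. Qed.

Lemma H_inv x : H x -> H (inv x).
Proof. destruct subgroup_H as (_ & _ & inv_closed). apply inv_closed. Qed.

Lemma rep_unique g s : S s -> H (mul s (inv g)) -> rep g = s.
Proof.
  intros Ss Hs. destruct transversal_S as (_ & _ & unique).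
  apply unique; [apply rep_S | exact Ss |].
  unfold in_rcoset. rewrite <- (rdiv_trans (rep g) g s).
  apply H_mul; [apply rep_coset | apply H_inv, Hs].
Qed.

Lemma rep_id s : S s -> rep s = s.
Proof. intros Ss. apply rep_unique; [exact Ss |]. rewrite mulgV. exact H_one. Qed.

Lemma rep_Hmul h g : H h -> rep (mul h g) = rep g.
Proof.
  intros Hh. apply rep_unique; [apply rep_S |].
  rewrite inv_mul, mulA. apply H_mul; [apply rep_coset | apply H_inv, Hh].
Qed.

Lemma rep_decomp g : exists k, H k /\ g = mul k (rep g).
Proof.
  exists (inv (mul (rep g) (inv g))). split; [apply H_inv, rep_coset |].
  rewrite inv_rdiv, mulgVK. reflexivity.
Qed.

Lemma rep_mul_l a b : rep (mul a b) = rep (mul (rep a) b).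
Proof.
  destruct (rep_decomp a) as [k [Hk Ea]].
  rewrite Ea at 1. rewrite <- mulA. apply rep_Hmul, Hk.
Qed.

Hypothesis induced_circ : is_induced_op mul inv H S circ.
Hypothesis theta_spec : is_theta mul inv H S theta.

Lemma circ_rep x y : S x -> S y -> circ x y = rep (mul x y).
Proof.
  intros Sx Sy. destruct (induced_circ Sx Sy). symmetry. apply rep_unique; assumption.
Qed.

Lemma theta_rep x h : S x -> H h -> theta x h = rep (mul x h).
Proof.
  intros Sx Hh. destruct (theta_spec Sx Hh). symmetry. apply rep_unique; assumption.
Qed.

Hypothesis congruence_U : is_congruence one S circ U.
Hypothesis theta_in_U : forall x h, S x -> H h -> U x (theta x h).

Notation N := (setmul mul H (class_one one U)).

Lemma U_in_S x y : U x y -> S y.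
Proof. destruct congruence_U as (in_S & _). apply (in_S x y). Qed.

Lemma U_refl x : S x -> U x x.
Proof. destruct congruence_U as (_ & refl & _). apply refl. Qed.

Lemma U_sym x y : U x y -> U y x.
Proof. destruct congruence_U as (_ & _ & sym & _). apply sym. Qed.

Lemma U_trans x y z : U x y -> U y z -> U x z.
Proof. destruct congruence_U as (_ & _ & _ & trans & _). apply trans. Qed.

Lemma U_circ a a' b b' : U a a' -> U b b' -> U (circ a b) (circ a' b').
Proof. destruct congruence_U as (_ & _ & _ & _ & _ & compat & _). apply compat. Qed.

(* Right cancellation in S/U, a consequence of unique right division. *)
Lemma U_cancel_r X X' a : S X -> S X' -> S a -> U (circ X a) (circ X' a) -> U X X'.
Proof.
  intros SX SX' Sa E.
  destruct congruence_U as (_ & _ & _ & _ & _ & _ & division).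
  exact (division a a (circ X a) (circ X' a) X X' (U_refl Sa) E SX SX' eq_refl eq_refl).
Qed.

Lemma S_one : S one.
Proof. destruct transversal_S as (one_in & _). exact one_in. Qed.

Lemma rep_one : rep one = one.
Proof. apply rep_id, S_one. Qed.

Lemma circ1x x : S x -> circ one x = x.
Proof. intros Sx. rewrite (circ_rep S_one Sx), mul1g. apply rep_id, Sx. Qed.

Lemma circx1 x : S x -> circ x one = x.
Proof. intros Sx. rewrite (circ_rep Sx S_one), mulg1. apply rep_id, Sx. Qed.

(* The key fact: rep is a homomorphism G -> S/U.  Writing b = k rep b with
   k in H, we get rep (a b) = (rep a theta k) o rep b, and rep a theta k is
   U-equivalent to rep a by hypothesis. *)
Lemma rep_morphism a b : U (rep (mul a b)) (circ (rep a) (rep b)).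
Proof.
  destruct (rep_decomp b) as [k [Hk Eb]].
  assert (Sa : S (rep a)) by apply rep_S.
  assert (E : rep (mul a b) = circ (theta (rep a) k) (rep b)).
  { transitivity (rep (mul (rep (mul (rep a) k)) (rep b))).
    - rewrite <- rep_mul_l, <- mulA, <- Eb. apply rep_mul_l.
    - rewrite <- (theta_rep Sa Hk). symmetry.
      apply circ_rep; [apply (theta_spec Sa Hk) | apply rep_S]. }
  rewrite E. apply U_circ; [apply U_sym, theta_in_U; auto | apply U_refl, rep_S].
Qed.

Lemma kernel_spec g : N g <-> U one (rep g).
Proof.
  split.
  - intros [h [t [Hh [Tt E]]]]. subst g.
    rewrite rep_Hmul, (rep_id (U_in_S Tt)) by exact Hh. exact Tt.
  - intros E. destruct (rep_decomp g) as [k [Hk Ek]].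
    exists k, (rep g). auto.
Qed.

Lemma kernel_absorb_r a n : N n -> U (rep (mul a n)) (rep a).
Proof.
  intros Nn. apply kernel_spec in Nn.
  apply (U_trans (rep_morphism a n)). rewrite <- (circx1 (rep_S a)) at 2.
  apply U_circ; [apply U_refl, rep_S | apply U_sym, Nn].
Qed.

Lemma kernel_absorb_l n a : N n -> U (rep (mul n a)) (rep a).
Proof.
  intros Nn. apply kernel_spec in Nn.
  apply (U_trans (rep_morphism n a)). rewrite <- (circ1x (rep_S a)) at 2.
  apply U_circ; [apply U_sym, Nn | apply U_refl, rep_S].
Qed.

Lemma rep_inverse_l x : U (circ (rep (inv x)) (rep x)) one.
Proof. apply U_sym. rewrite <- rep_one, <- (mulVg x). apply rep_morphism. Qed.

Lemma rep_inverse_r x : U (circ (rep x) (rep (inv x))) one.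
Proof. apply U_sym. rewrite <- rep_one, <- (mulgV x). apply rep_morphism. Qed.

(* S/U is a group: associativity is transported from G through rep. *)
Theorem quotient_is_group : quotient_loop_is_group one S circ U.
Proof.
  split; [exact U_circ | split; [| split]].
  - intros x y z Sx Sy Sz.
    rewrite (circ_rep Sx Sy), (circ_rep (rep_S _) Sz), (circ_rep Sy Sz).
    rewrite <- rep_mul_l, <- mulA.
    rewrite <- (rep_id Sx) at 2. apply rep_morphism.
  - intros x Sx. rewrite circ1x, circx1 by exact Sx. split; apply U_refl, Sx.
  - intros x Sx. exists (rep (inv x)). split; [apply rep_S | split].
    + rewrite <- (rep_id Sx) at 1. apply rep_inverse_r.
    + rewrite <- (rep_id Sx) at 2. apply rep_inverse_l.
Qed.

(* N = H T is a normal subgroup of G: by kernel_spec it is the preimage of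
   the identity class under the homomorphism rep. *)
Theorem kernel_normal : is_normal_subgroup mul inv one N.
Proof.
  split; [split; [| split] |].
  - apply kernel_spec. rewrite rep_one. apply U_refl, S_one.
  - intros x y Nx Ny. apply kernel_spec. apply kernel_spec in Nx.
    exact (U_trans Nx (U_sym (kernel_absorb_r x Ny))).
  - intros x Nx. apply kernel_spec.
    pose proof (kernel_absorb_r (inv x) Nx) as E. rewrite mulVg, rep_one in E. exact E.
  - intros g n Nn. apply kernel_spec.
    apply (U_trans (U_sym (rep_inverse_l g))), U_sym.
    apply (U_trans (rep_morphism _ _)), U_circ; [apply kernel_absorb_r, Nn | apply U_refl, rep_S].
Qed.

Lemma H_sub_kernel h : H h -> N h.
Proof.
  intros Hh. exists h, one. rewrite mulg1.
  split; [exact Hh | split; [apply U_refl, S_one | reflexivity]].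
Qed.

Lemma kernel_meet_S s : N s /\ S s <-> class_one one U s.
Proof.
  rewrite kernel_spec. split.
  - intros [E Ss]. rewrite (rep_id Ss) in E. exact E.
  - intros E. assert (Ss : S s) by exact (U_in_S E).
    rewrite (rep_id Ss). exact (conj E Ss).
Qed.

(* rep induces an isomorphism from G/N onto S/U; it is injective on cosets
   of N because S/U admits right cancellation. *)
Theorem rep_isomorphism : quotients_isomorphic mul inv N S circ U.
Proof.
  exists rep. split; [apply rep_S | split; [| split]].
  - intros g1 g2. split.
    + intros E. rewrite <- (mulgVK g1 g2) at 1. apply kernel_absorb_l, E.
    + intros E. apply kernel_spec, U_sym.
      apply (U_cancel_r (rep_S _) S_one (rep_S g2)).
      rewrite circ1x by apply rep_S.
      apply (U_trans (U_sym (rep_morphism _ _))). rewrite mulgVK. exact E.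
  - exact rep_morphism.
  - intros s Ss. exists s. rewrite (rep_id Ss). apply U_refl, Ss.
Qed.

End TransversalQuotient.

Theorem mainTheorem8 (G : Type) (mul : G -> G -> G) (inv : G -> G) (one : G)
  (H S : G -> Prop) (circ theta : G -> G -> G) (U : G -> G -> Prop) :
  is_group mul inv one ->
  is_subgroup mul inv one H ->
  right_transversal mul inv one H S ->
  is_induced_op mul inv H S circ ->
  is_theta mul inv H S theta ->
  is_congruence one S circ U ->
  (forall x h, S x -> H h -> U x (theta x h)) ->
  quotient_loop_is_group one S circ U /\
  is_normal_subgroup mul inv one (setmul mul H (class_one one U)) /\
  (forall h, H h -> setmul mul H (class_one one U) h) /\
  (forall s, (setmul mul H (class_one one U) s /\ S s) <-> class_one one U s) /\
  quotients_isomorphic mul inv (setmul mul H (class_one one U)) S circ U.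
Proof.
  intros group_G subgroup_H transversal_S induced_circ theta_spec congruence_U theta_in_U.
  split; [| split; [| split; [| split]]].
  - eapply quotient_is_group; eassumption.
  - eapply kernel_normal; eassumption.
  - intros h. eapply H_sub_kernel; eassumption.
  - intros s. eapply kernel_meet_S; eassumption.
  - eapply rep_isomorphism; eassumption.
Qed.
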